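(* Let $R$ be a commutative unital ring with $\operatorname{sr}(R) \le 2$ and let $I$ be an ideal of $R$. Then the natural map $\operatorname{SK}_1(R) \to \operatorname{SK}_1(R/I)$ is surjective.
   Context: The Bass stable rank: a row $(r_1,\dots,r_n)\in R^n$ is unimodular if $\sum_i Rr_i=R$; a unimodular row $(r_1,\dots,r_{n+1})$ is stable if there exist $s_i\in R$ with $(r_1+s_1r_{n+1},\dots,r_n+s_nr_{n+1})$ unimodular; $\operatorname{sr}(R)$ is the least $n>0$ such that every unimodular row of length $n+1$ is stable. $\operatorname{E}_n(R)$ is the subgroup of $\operatorname{SL}_n(R)$ generated by elementary matrices $I_n + a\epsilon_{ij}$ ($a\in R$, $i\ne j$). $\operatorname{SL}(R)=\bigcup_n\operatorname{SL}_n(R)$ and $\operatorname{E}(R)=\bigcup_n\operatorname{E}_n(R)$ via the embeddings $A\mapsto\begin{pmatrix}A&0\\0&1\end{pmatrix}$; $\operatorname{E}(R)$ is normal in $\operatorname{SL}(R)$ and $\operatorname{SK}_1(R)=\operatorname{SL}(R)/\operatorname{E}(R)$. *)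

From HB Require Import structures.
From mathcomp Require Import all_boot all_order all_algebra.
Set Implicit Arguments. Unset Strict Implicit. Unset Printing Implicit Defensive.
Import GRing.Theory.
Local Open Scope ring_scope.

Definition unimodular (R : comPzRingType) (n : nat) (r : 'rV[R]_n) : Prop :=
  exists s : 'rV[R]_n, \sum_(i < n) s 0 i * r 0 i = 1.

Definition stable_row (R : comPzRingType) (n : nat) (r : 'rV[R]_n.+1) : Prop :=
  exists s : 'rV[R]_n,
    unimodular (\row_(i < n) (r 0 (widen_ord (leqnSn n) i) + s 0 i * r 0 ord_max)).

Definition sr_prop (R : comPzRingType) (n : nat) : Prop :=
  forall r : 'rV[R]_n.+1, unimodular r -> stable_row r.

(* sr(R) <= m : the least n > 0 with sr_prop R n exists and is <= m,
   i.e. some n with 0 < n <= m satisfies sr_prop R n. *)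
Definition sr_le (R : comPzRingType) (m : nat) : Prop :=
  exists n : nat, (0 < n <= m)%N /\ sr_prop R n.

Definition elem_mx (R : comPzRingType) (n : nat) (i j : 'I_n) (a : R) : 'M[R]_n :=
  1%:M + a *: delta_mx i j.

(* E_n(R): subgroup of SL_n(R) generated by elementary matrices.  Since
   (I + a e_ij)^{-1} = I - a e_ij is again elementary, it is the set of finite
   products of elementary matrices (empty product = identity). *)
Inductive En (R : comPzRingType) (n : nat) : 'M[R]_n -> Prop :=
  | En_one : En 1%:M
  | En_mul (A : 'M[R]_n) (i j : 'I_n) (a : R) :
      En A -> i != j -> En (A *m elem_mx i j a).

Definition stab_entry (R : comPzRingType) (n : nat) (B : 'M[R]_n) (i j : nat) : R :=
  match @insub nat (fun k => k < n)%N _ i, @insub nat (fun k => k < n)%N _ j with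
  | Some i', Some j' => B i' j'
  | _, _ => ((i == j) : nat)%:R
  end.

(* image of B : 'M_n in 'M_k (for n <= k) under the embeddings A |-> diag(A,1) *)
Definition stab (R : comPzRingType) (n k : nat) (B : 'M[R]_n) : 'M[R]_k :=
  \matrix_(i < k, j < k) stab_entry B i j.

Definition is_ideal (R : comPzRingType) (I : R -> Prop) : Prop :=
  [/\ I 0, (forall x y, I x -> I y -> I (x + y)) & (forall a x, I x -> I (a * x))].

(* Elementary column operations carry every matrix of SL_n(R/I) to the image of
   a matrix of SL_n(R).  For n >= 3 the first row of B is unimodular, and R/I
   inherits the stable range condition from R in all lengths >= 2, so the last
   n - 1 entries of that row can be made unimodular by adding multiples of the
   first column; two more column operations then bring B to diag(1, B') and
   induction applies.  For n = 2 the second column of B lifts, using sr(R) <= 2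
   once more, to a unimodular column over R; completed to a matrix of SL_2(R),
   its image has the same second column as B and therefore differs from B by a
   single elementary matrix. *)

From HB Require Import structures.
From mathcomp Require Import all_boot all_order all_algebra perm.
From mathcomp Require Import ring.
Set Implicit Arguments. Unset Strict Implicit. Unset Printing Implicit Defensive.
Import GRing.Theory.
Local Open Scope ring_scope.

Section StableRange.
Variable R : comPzRingType.

Lemma unimodularE n (r : 'rV[R]_n) : unimodular r <-> exists v : 'cV_n, r *m v = 1%:M.
Proof.
split=> [[s hs]|[v hv]].
  exists s^T; apply/matrixP => i j; rewrite !ord1 !mxE eqxx mulr1n -hs.
  by apply: eq_bigr => k _; rewrite !mxE mulrC.
exists v^T; move/matrixP/(_ 0 0): hv; rewrite !mxE eqxx mulr1n => <-.
by apply: eq_bigr => k _; rewrite !mxE mulrC.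
Qed.

Lemma unimodular_col_perm n (s : 'S_n) (r : 'rV[R]_n) :
  unimodular r -> unimodular (col_perm s r).
Proof.
move/unimodularE=> [v hv]; apply/unimodularE; exists (perm_mx s *m v).
by rewrite col_permE mulmxA -(mulmxA r) -perm_mxM mulVg perm_mx1 mulmx1.
Qed.

Lemma stable_row_lift_permE m (r : 'rV[R]_(1 + m)) (s : 'rV[R]_m) :
  let r' := col_perm (lift_perm ord_max ord0 1) r in
  \row_i (r' 0 (widen_ord (leqnSn m) i) + s 0 i * r' 0 ord_max)
    = rsubmx r + lsubmx r *m s.
Proof.
apply/matrixP => i j; rewrite !ord1 !mxE big_ord1 !mxE lift_perm_id mulrC.
have -> : widen_ord (leqnSn m) j = lift ord_max j.
  by apply: val_inj; rewrite /= /bump leqNgt ltn_ord.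
by rewrite lift_perm_lift perm1; congr (r 0 _ + r 0 _ * _); apply: val_inj.
Qed.

(* The pivot of the stable range condition is moved to the front, where a row
   of length [1 + m] splits as [row_mx b a]. *)
Lemma sr_prop_row_mx m : sr_prop R m <->
  forall (b : 'M[R]_1) (a : 'rV[R]_m), unimodular (row_mx b a) ->
  exists s, unimodular (a + b *m s).
Proof.
pose sigma : 'S_(m.+1) := lift_perm ord_max ord0 1.
split=> [hsr b a uba|hsr r ur].
  have [s us] := hsr _ (unimodular_col_perm sigma uba).
  by exists s; rewrite -(row_mxKr b a) -{2}(row_mxKl b a) -stable_row_lift_permE.
pose r' : 'rV_(1 + m) := col_perm sigma^-1 r.
have -> : r = col_perm sigma r' by rewrite -col_permM mulgV col_perm1.
have [|s us] := hsr (lsubmx r') (rsubmx r').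
  by rewrite hsubmxK; apply: unimodular_col_perm.
by exists s; rewrite stable_row_lift_permE.
Qed.

Lemma sr_propS m : sr_prop R m -> sr_prop R m.+1.
Proof.
rewrite !sr_prop_row_mx => hsr b a.
rewrite -(@hsubmxK R 1%N 1%N m a); move: (lsubmx _) (rsubmx _) => c a'.
case/unimodularE=> v; rewrite -[v]vsubmxK; move: (usubmx v) (dsubmx v) => x {}v.
rewrite -(@vsubmxK R 1%N m 1%N v); move: (usubmx _) (dsubmx _) => y v'.
rewrite mul_row_col => hv.
have {}hv : b *m x + (c *m y + a' *m v') = 1%:M by rewrite -mul_row_col.
(* Stability for the shorter row whose first entry merges [b] and [c]. *)
have [|s /unimodularE [z hz]] := hsr (b *m x + c *m y) a'.
  by apply/unimodularE; exists (col_mx 1%:M v'); rewrite mul_row_col mulmx1 -addrA.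
have hrow : (row_mx c a' + b *m row_mx (0 : 'M_1) (x *m s)) *m col_mx (y *m s *m z) z
    = 1%:M.
  rewrite mul_mx_row mulmx0 add_row_mx addr0 mul_row_col -hz !mulmxDl !mulmxA.
  by rewrite addrC addrA.
exists (row_mx (0 : 'M_1) (x *m s)).
by apply/unimodularE; exists (col_mx (y *m s *m z) z).
Qed.

Lemma sr_le_sr_prop k m : sr_le R k -> (k <= m)%N -> sr_prop R m.
Proof.
move=> [n [/andP [_ nk] hn]] km; rewrite -(subnKC (leq_trans nk km)).
by elim: (m - n)%N => [|d IH]; [rewrite addn0 | rewrite addnS; apply: sr_propS].
Qed.

End StableRange.

Section ElementaryMatrices.
Variable S : comPzRingType.

Lemma En_mulmx n (A B : 'M[S]_n) : En A -> En B -> En (A *m B).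
Proof.
move=> hA; elim=> [|B' i j a _ IH ij]; first by rewrite mulmx1.
by rewrite mulmxA; apply: En_mul.
Qed.

Lemma En_elem_mx n (i j : 'I_n) (a : S) : i != j -> En (elem_mx i j a).
Proof. by move=> ij; rewrite -[elem_mx _ _ _]mul1mx; apply: En_mul (En_one _ _) ij. Qed.

Lemma trmx_elem_mx n (i j : 'I_n) (a : S) : (elem_mx i j a)^T = elem_mx j i a.
Proof. by rewrite /elem_mx linearD linearZ /= trmx1 trmx_delta. Qed.

Lemma En_trmx n (A : 'M[S]_n) : En A -> En A^T.
Proof.
elim=> [|A' i j a _ IH ij]; first by rewrite trmx1; apply: En_one.
by rewrite trmx_mul trmx_elem_mx; apply: En_mulmx IH; apply: En_elem_mx; rewrite eq_sym.
Qed.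

Lemma det_elem_mx n (i j : 'I_n) (a : S) : i != j -> \det (elem_mx i j a) = 1.
Proof.
move=> ij; wlog ji : i j ij / (j < i)%N => [hw|].
  case: (ltngtP i j) => [ij'|ji|eij]; last by rewrite (val_inj eij) eqxx in ij.
    by rewrite -det_tr trmx_elem_mx hw // eq_sym.
  exact: hw.
rewrite det_trig.
  apply: big1 => k _; rewrite !mxE eqxx.
  by case: eqP => [->|_]; rewrite ?(negPf ij) mulr0 addr0.
apply/is_trig_mxP => x y xy; rewrite !mxE.
have -> : (x == y) = false by apply/negbTE; apply/eqP => exy; rewrite exy ltnn in xy.
case: eqP => [exi|_]; case: eqP => [eyj|_] /=; rewrite ?mulr0 ?add0r //.
by move: xy; rewrite exi eyj ltnNge (ltnW ji).
Qed.

Lemma block1_elem_mx k n (i j : 'I_n) (a : S) :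
  block_mx 1%:M 0 0 (elem_mx i j a) = elem_mx (rshift k i) (rshift k j) a.
Proof.
rewrite /elem_mx (scalar_mx_block k n).
have -> : delta_mx (rshift k i) (rshift k j)
    = block_mx 0 0 0 (delta_mx i j) :> 'M[S]_(k + n).
  by rewrite delta_mx_dshift delta_mx_rshift -row_mx0.
by rewrite scale_block_mx add_block_mx !scaler0 !addr0.
Qed.

Lemma En_block1 k n (e : 'M[S]_n) : En e -> En (block_mx 1%:M 0 0 e : 'M_(k + n)).
Proof.
elim=> [|A i j a _ IH ij]; first by rewrite -scalar_mx_block; apply: En_one.
have -> : block_mx 1%:M 0 0 (A *m elem_mx i j a)
    = block_mx 1%:M 0 0 A *m block_mx (1%:M : 'M_k) 0 0 (elem_mx i j a).
  by rewrite mulmx_block !mulmx0 !mul0mx !addr0 add0r mulmx1.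
by rewrite block1_elem_mx; apply: En_mul => //; rewrite eq_rshift.
Qed.

Definition ublock_mx k m (X : 'M[S]_(k, m)) : 'M_(k + m) := block_mx 1%:M X 0 1%:M.
Definition lblock_mx k m (Y : 'M[S]_(m, k)) : 'M_(k + m) := block_mx 1%:M 0 Y 1%:M.

Lemma mul_block_ublock_mx p1 p2 k m (A : 'M[S]_(p1, k)) (B : 'M_(p1, m))
    (C : 'M_(p2, k)) (D : 'M_(p2, m)) (X : 'M_(k, m)) :
  block_mx A B C D *m ublock_mx X = block_mx A (A *m X + B) C (C *m X + D).
Proof. by rewrite mulmx_block !mulmx0 !mulmx1 !addr0. Qed.

Lemma mul_block_lblock_mx p1 p2 k m (A : 'M[S]_(p1, k)) (B : 'M_(p1, m))
    (C : 'M_(p2, k)) (D : 'M_(p2, m)) (Y : 'M_(m, k)) :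
  block_mx A B C D *m lblock_mx Y = block_mx (A + B *m Y) B (C + D *m Y) D.
Proof. by rewrite mulmx_block !mulmx0 !mulmx1 !add0r. Qed.

Lemma ublock_mxD k m (X Y : 'M[S]_(k, m)) :
  ublock_mx (X + Y) = ublock_mx X *m ublock_mx Y.
Proof. by rewrite [RHS]mul_block_ublock_mx mul1mx mul0mx add0r addrC. Qed.

Lemma ublock_delta_mx k m (i : 'I_k) (j : 'I_m) (a : S) :
  ublock_mx (a *: delta_mx i j) = elem_mx (lshift m i) (rshift k j) a.
Proof.
rewrite /ublock_mx /elem_mx (scalar_mx_block k m).
have -> : delta_mx (lshift m i) (rshift k j)
    = block_mx 0 (delta_mx i j) 0 0 :> 'M[S]_(k + m).
  by rewrite delta_mx_ushift delta_mx_rshift -row_mx0.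
by rewrite scale_block_mx add_block_mx !scaler0 !addr0 add0r.
Qed.

Lemma En_ublock_mx k m (X : 'M[S]_(k, m)) : En (ublock_mx X).
Proof.
pose P (X : 'M[S]_(k, m)) := En (ublock_mx X).
have P0 : P 0 by rewrite /P /ublock_mx -scalar_mx_block; apply: En_one.
have PD X1 X2 : P X1 -> P X2 -> P (X1 + X2) by rewrite /P ublock_mxD; apply: En_mulmx.
rewrite [X]matrix_sum_delta; apply: (big_ind P) => // i _; apply: (big_ind P) => // j _.
by rewrite /P ublock_delta_mx; apply: En_elem_mx; rewrite eq_lrshift.
Qed.

Lemma En_lblock_mx k m (Y : 'M[S]_(m, k)) : En (lblock_mx Y).
Proof.
have -> : lblock_mx Y = (ublock_mx Y^T)^T by rewrite tr_block_mx !trmx1 trmx0 trmxK.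
by apply: En_trmx; apply: En_ublock_mx.
Qed.

Definition Eequiv n (C D : 'M[S]_n) := exists2 e, En e & D = C *m e.

Lemma Eequiv_refl n (C : 'M[S]_n) : Eequiv C C.
Proof. by exists 1%:M; [apply: En_one | rewrite mulmx1]. Qed.

Lemma Eequiv_mul n (C e : 'M[S]_n) : En e -> Eequiv C (C *m e).
Proof. by exists e. Qed.

Lemma Eequiv_trans n (C D E : 'M[S]_n) : Eequiv C D -> Eequiv D E -> Eequiv C E.
Proof.
move=> [e1 h1 ->] [e2 h2 ->]; exists (e1 *m e2); last by rewrite mulmxA.
exact: En_mulmx.
Qed.

Lemma En_det n (e : 'M[S]_n) : En e -> \det e = 1.
Proof.
elim=> [|A i j a _ IH ij]; first exact: det1.
by rewrite det_mulmx IH det_elem_mx // mulr1.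
Qed.

Lemma Eequiv_det n (C D : 'M[S]_n) : Eequiv C D -> \det D = \det C.
Proof. by move=> [e /En_det he ->]; rewrite det_mulmx he mulr1. Qed.

Lemma Eequiv_block1 k n (C D : 'M[S]_n) :
  Eequiv C D -> Eequiv (block_mx 1%:M 0 0 C : 'M_(k + n)) (block_mx 1%:M 0 0 D).
Proof.
move=> [e he ->]; exists (block_mx 1%:M 0 0 e); first exact: En_block1.
by rewrite mulmx_block !mulmx0 !mul0mx !addr0 add0r mulmx1.
Qed.

End ElementaryMatrices.

Lemma det_mx22 (T : comPzRingType) (M : 'M[T]_2) :
  \det M = M 0 0 * M 1 1 - M 0 1 * M 1 0.
Proof.
have l01 : lift 0 0 = 1 :> 'I_2 by apply: val_inj.
have l10 : lift 1 0 = 0 :> 'I_2 by apply: val_inj.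
rewrite (expand_det_row _ 0) !big_ord_recl big_ord0 /cofactor !det_mx11 !mxE /=.
by rewrite /bump /= l01 l10 expr0 expr1; ring.
Qed.

Lemma big_ord2 (T : nmodType) (F : 'I_2 -> T) : \sum_(i < 2) F i = F 0 + F 1.
Proof. by rewrite !big_ord_recl big_ord0 addr0; congr (F _ + F _); apply: val_inj. Qed.

Lemma ord2P (i : 'I_2) : i = 0 \/ i = 1.
Proof. by case: i => [[|[|//]]] ?; [left|right]; apply: val_inj. Qed.

Section Reduction.
Variable S : comPzRingType.

Lemma det1_row_unimodular n (C : 'M[S]_n) i : \det C = 1 -> unimodular (row i C).
Proof.
move=> dC; exists (\row_j cofactor C i j); rewrite -dC (expand_det_row C i).
by apply: eq_bigr => j _; rewrite !mxE mulrC.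
Qed.

Lemma Eequiv_clear_corner m (c : 'M[S]_1) u v (D : 'M_m) z :
  u *m z = 1%:M ->
  exists v' D', Eequiv (block_mx c u v D) (block_mx 1%:M 0 v' D').
Proof.
move=> uz; set y := z *m (1%:M - c).
have e2 := Eequiv_mul (block_mx c u v D) (En_lblock_mx y).
rewrite mul_block_lblock_mx mulmxA uz mul1mx addrC subrK in e2.
set v' := v + D *m y in e2.
have e3 := Eequiv_mul (block_mx 1%:M u v' D) (En_ublock_mx (- u)).
rewrite mul_block_ublock_mx mul1mx addNr in e3.
by exists v', (v' *m - u + D); apply: Eequiv_trans e3.
Qed.

Lemma Eequiv_clear_col m (v : 'cV[S]_m) (D : 'M_m) : \det D = 1 ->
  Eequiv (block_mx 1%:M 0 v D) (block_mx 1%:M 0 0 D).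
Proof.
move=> dD; have := Eequiv_mul (block_mx 1%:M 0 v D) (En_lblock_mx (- (\adj D *m v))).
by rewrite mul_block_lblock_mx mul0mx addr0 mulmxN mulmxA mul_mx_adj dD mul1mx subrr.
Qed.

Lemma Eequiv_reduce m (C : 'M[S]_(1 + m)) : sr_prop S m -> \det C = 1 ->
  exists2 D : 'M_m, \det D = 1 & Eequiv C (block_mx 1%:M 0 0 D).
Proof.
move=> /sr_prop_row_mx hsr dC; have uC := det1_row_unimodular (lshift m 0) dC.
move: dC uC; rewrite -[C]submxK.
move: (ulsubmx C) (ursubmx C) (dlsubmx C) (drsubmx C) => c u v D dC uC.
have [|s /unimodularE [z uz]] := hsr c u.
  by move: uC; rewrite block_mxEv rowKu row_id.
have e1 := Eequiv_mul (block_mx c u v D) (En_ublock_mx s).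
rewrite mul_block_ublock_mx addrC in e1.
have [v' [D' e2]] := Eequiv_clear_corner c v (v *m s + D) uz.
have e12 := Eequiv_trans e1 e2.
have dD' : \det D' = 1 by rewrite -dC -(Eequiv_det e12) det_lblock det1 mul1r.
by exists D' => //; apply: Eequiv_trans e12 (Eequiv_clear_col v' dD').
Qed.

(* (x0, x1) and (y0, y1) are first columns completing (p, q) to SL_2 matrices. *)
Lemma det2_same_col (x0 x1 y0 y1 p q : S) :
  x0 * q - p * x1 = 1 -> y0 * q - p * y1 = 1 ->
  y0 = x0 + p * (x0 * y1 - y0 * x1) /\ y1 = x1 + q * (x0 * y1 - y0 * x1).
Proof.
move=> dx dy; split; apply/eqP; rewrite -subr_eq0; apply/eqP.
  transitivity (x0 * (y0 * q - p * y1 - 1) - y0 * (x0 * q - p * x1 - 1)); first ring.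
  by rewrite dx dy !subrr !mulr0 subrr.
transitivity (x1 * (y0 * q - p * y1 - 1) - y1 * (x0 * q - p * x1 - 1)); first ring.
by rewrite dx dy !subrr !mulr0 subrr.
Qed.

Lemma Eequiv_eq_col1 (C D : 'M[S]_2) :
  \det C = 1 -> \det D = 1 -> (forall i, D i 1 = C i 1) -> Eequiv C D.
Proof.
move=> dC dD CD1; rewrite !det_mx22 !CD1 in dC dD.
have [D0 D1] := det2_same_col dC dD.
exists (elem_mx 1 0 (C 0 0 * D 1 0 - D 0 0 * C 1 0)); first exact: En_elem_mx.
apply/matrixP => i j; rewrite !mxE big_ord2 !mxE.
case: (ord2P i) => ->; case: (ord2P j) => -> /=;
  by rewrite ?(mulr0, mulr1, addr0, add0r, CD1).
Qed.

End Reduction.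

Section Quotient.
Variables (R S : comPzRingType) (f : {rmorphism R -> S}) (g : S -> R).
Hypothesis fgK : cancel g f.

Lemma map_mxK m n : cancel (@map_mx _ _ g m n) (map_mx f).
Proof. by move=> A; rewrite -map_mx_comp map_mx_id. Qed.

Lemma unimodular_map n (a : 'rV[R]_n) : unimodular a -> unimodular (map_mx f a).
Proof.
case/unimodularE=> v hv; apply/unimodularE.
by exists (map_mx f v); rewrite -map_mxM hv map_mx1.
Qed.

(* [t] lies in the kernel of [f] and makes [row_mx t (g r)] unimodular, so
   stability corrects the lift [g r] within its fibre. *)
Lemma lift_unimodular m : sr_prop R m ->
  forall r : 'rV[S]_m, unimodular r -> exists2 a, map_mx f a = r & unimodular a.
Proof.
move=> /sr_prop_row_mx hsr r /unimodularE [v hv].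
pose t := map_mx g r *m map_mx g v - 1%:M.
have ft : map_mx f t = 0 by rewrite map_mxB map_mxM !map_mxK hv map_mx1 subrr.
have [|s us] := hsr t (map_mx g r).
  apply/unimodularE; exists (col_mx (- 1%:M) (map_mx g v)).
  by rewrite mul_row_col mulmxN mulmx1 opprB subrK.
by exists (map_mx g r + t *m s); rewrite // map_mxD map_mxM ft mul0mx addr0 map_mxK.
Qed.

Lemma sr_prop_quotient m : sr_prop R m.+1 -> sr_prop R m -> sr_prop S m.
Proof.
move=> hsr1 /sr_prop_row_mx hsr; apply/sr_prop_row_mx => b a uba.
have [c fc uc] := lift_unimodular hsr1 uba.
have [|s us] := hsr (lsubmx (c : 'rV_(1 + m))) (rsubmx (c : 'rV_(1 + m))).
  by rewrite hsubmxK.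
have fl : map_mx f (lsubmx (c : 'rV_(1 + m))) = b by rewrite map_lsubmx fc row_mxKl.
have fr : map_mx f (rsubmx (c : 'rV_(1 + m))) = a by rewrite map_rsubmx fc row_mxKr.
by exists (map_mx f s); rewrite -fl -fr -map_mxM -map_mxD; apply: unimodular_map.
Qed.

Hypothesis srR2 : sr_prop R 2.
Hypothesis srS : forall m, (1 < m)%N -> sr_prop S m.

Lemma SL2_lift (C : 'M[S]_2) :
  \det C = 1 -> exists2 A : 'M[R]_2, \det A = 1 & Eequiv C (map_mx f A).
Proof.
move=> dC; have uC : unimodular (row 1 C^T).
  by apply: det1_row_unimodular; rewrite det_tr.
have [a fa [w aw]] := lift_unimodular srR2 uC.
pose A := \matrix_(i < 2, j < 2)
  if j == 1 then a 0 i else if i == 0 then w 0 1 else - w 0 0.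
have dA : \det A = 1 by rewrite det_mx22 !mxE /= -aw big_ord2; ring.
exists A => //; apply: Eequiv_eq_col1 => //; first by rewrite det_map_mx dA rmorph1.
by move=> i; move/matrixP/(_ 0 i): fa; rewrite !mxE.
Qed.

Lemma Eequiv_lift n (C : 'M[S]_n) :
  \det C = 1 -> exists2 A : 'M[R]_n, \det A = 1 & Eequiv C (map_mx f A).
Proof.
elim: n C => [|[|[|n]] IH] C dC; last first.
- have [D dD eCD] := Eequiv_reduce (srS (isT : 1 < n.+2)%N) dC.
  have [A dA eDA] := IH D dD.
  have dA1 : \det (block_mx 1%:M 0 0 A : 'M_(1 + n.+2)) = 1.
    by rewrite det_lblock det1 mul1r.
  exists (block_mx (1%:M : 'M_1) 0 0 A) => //.
  have -> : map_mx f (block_mx (1%:M : 'M_1) 0 0 A) = block_mx 1%:M 0 0 (map_mx f A).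
    by rewrite map_block_mx map_mx1 !map_mx0.
  by apply: Eequiv_trans eCD (Eequiv_block1 _ eDA).
- exact: SL2_lift.
- rewrite [C]mx11_scalar -det_mx11 dC.
  by exists 1%:M; rewrite ?det1 ?map_mx1 //; apply: Eequiv_refl.
have -> : C = 1%:M by apply/matrixP => -[].
by exists 1%:M; rewrite ?det1 ?map_mx1 //; apply: Eequiv_refl.
Qed.

End Quotient.

Lemma stab_id (T : comPzRingType) n (X : 'M[T]_n) : stab n X = X.
Proof. by apply/matrixP => i j; rewrite mxE /stab_entry !valK. Qed.

Theorem mainTheorem4 (R : comPzRingType) (I : R -> Prop) (S : comPzRingType)
    (f : {rmorphism R -> S}) :
  sr_le R 2 ->
  is_ideal I ->
  (forall y : S, exists x : R, f x = y) ->
  (forall x : R, f x = 0 <-> I x) ->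
  forall (n : nat) (B : 'M[S]_n), \det B = 1 ->
  exists (m : nat) (A : 'M[R]_m), \det A = 1 /\
    exists k : nat, (n <= k)%N /\ (m <= k)%N /\
      exists e : 'M[S]_k, En e /\ stab k (map_mx f A) = stab k B *m e.
Proof.
move=> srR _ f_surj _ n B dB.
have f_surj' y : exists x, f x == y by have [x <-] := f_surj y; exists x.
pose g y := xchoose (f_surj' y).
have fgK : cancel g f by move=> y; apply/eqP; apply: (xchooseP (f_surj' y)).
have srR' m : (2 <= m)%N -> sr_prop R m := sr_le_sr_prop srR.
have srS m : (1 < m)%N -> sr_prop S m.
  by move=> m1; apply: (sr_prop_quotient fgK); apply: srR'; rewrite // ltnW.
have [A dA [e he eA]] := Eequiv_lift fgK (srR' 2%N isT) srS dB.
exists n, A; split=> //; exists n; do 2!split=> //.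
by exists e; rewrite !stab_id.
Qed.
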